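(* Let $\alpha>0$ and $p>1$ be constants. For $\xi>0$, let $z$ be the solution of \[ z''+|x|^{\alpha}z^p=0,\qquad z(\xi)=1,\quad z'(\xi)=0. \] Let $a(\xi)$ denote the first root of $z$ greater than $\xi$, and $b(\xi)$ the first root of $z$ to the left of $\xi$. Assume that the equation $a(\xi)=-b(\xi)$ has a unique solution $\xi_0>0$. Then for any $\lambda>0$ the problem \[ u''+\lambda|x|^{\alpha}u^p=0\quad(-1<x<1),\qquad u(-1)=u(1)=0, \] has exactly three positive solutions: \begin{itemize} \item $u_1(x)$, which is an even function; \item $u_2(x)$, which has its point of maximum at $\xi=\xi_0/a(\xi_0)$; \item $u_3(x)=u_2(-x)$. \end{itemize} Moreover, if $m$ denotes the maximum value of $u_2$ (that is, $m=u_2(\xi)$), then $\lambda=a(\xi_0)^{\alpha+2}/m^{p-1}$. *)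

From Stdlib Require Import Reals Lra.
From Coquelicot Require Import Coquelicot.
Open Scope R_scope.

(* Real power x^y for x >= 0, with the convention 0^y = 0 (y > 0 throughout).
   Only used for |x|^alpha and for z^p, u^p with z, u > 0. *)
Definition pw (x y : R) : R := if Rle_dec x 0 then 0 else Rpower x y.

(* [ivp_roots alpha p xi b a]: the solution z of
     z'' + |x|^alpha z^p = 0,  z(xi) = 1, z'(xi) = 0
   is positive on (b, a) with b < xi < a and vanishes at b and a, i.e.
   a = a(xi) is the first root of z to the right of xi and
   b = b(xi) the first root of z to the left of xi. *)
Definition ivp_roots (alpha p xi b a : R) : Prop :=
  b < xi < a /\
  exists z z' : R -> R,
    (forall x, b < x < a ->
       is_derive z x (z' x) /\
       is_derive z' x (- (pw (Rabs x) alpha * pw (z x) p))) /\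
    (forall x, b < x < a -> 0 < z x) /\
    z xi = 1 /\ z' xi = 0 /\
    z b = 0 /\ z a = 0 /\
    filterlim z (at_right b) (locally 0) /\
    filterlim z (at_left a) (locally 0).

Definition pos_sol (alpha p lambda : R) (u : R -> R) : Prop :=
  exists u' : R -> R,
    (forall x, -1 < x < 1 ->
       is_derive u x (u' x) /\
       is_derive u' x (- (lambda * pw (Rabs x) alpha * pw (u x) p))) /\
    (forall x, -1 < x < 1 -> 0 < u x) /\
    u (-1) = 0 /\ u 1 = 0 /\
    filterlim u (at_right (-1)) (locally 0) /\
    filterlim u (at_left 1) (locally 0).

From Stdlib Require Import Reals Lra Lia.
From Coquelicot Require Import Coquelicot.
Open Scope R_scope.

(* The equation is invariant under u(x) |-> k u(c x), which changes lambda into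
   lambda c^(alpha+2) / k^(p-1) and rescales the interval.  A positive solution v on
   (-1, 1) is concave and vanishes at both ends, so it has a critical point eta; rescaling
   it so that its maximum becomes 1 produces a solution z of the initial value problem
   z(xi) = 1, z'(xi) = 0 with xi = c eta and roots -c, c.  Since z <= 1, z^p is Lipschitz
   along z, and a Gronwall estimate on (z1 - z2)^2 + (z1' - z2')^2 shows that z, hence v,
   is determined by xi.  For xi = 0 this is the even solution, obtained by Picard
   iteration of the equation truncated at 1; for xi > 0 the symmetry of the roots forces
   xi = xi0; xi < 0 is the mirror image.  Strict monotonicity on either side of the
   maximum separates the three solutions. *)

(** * Real powers and calculus on the line *)

Lemma Rpower_le1 x a : 0 <= a -> 0 < x <= 1 -> Rpower x a <= 1.
Proof.
  intros Ha Hx. replace 1 with (Rpower 1 a).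
  - apply Rle_Rpower_l; lra.
  - unfold Rpower. rewrite ln_1, Rmult_0_r. apply exp_0.
Qed.

Lemma Rpower_inv_r X q : 0 < X -> q <> 0 -> Rpower (Rpower X (/ q)) q = X.
Proof. intros HX Hq. rewrite Rpower_mult, Rinv_l, Rpower_1 by assumption. reflexivity. Qed.

Lemma Rpower_inv_l X q : 0 < X -> q <> 0 -> Rpower (Rpower X q) (/ q) = X.
Proof. intros HX Hq. rewrite Rpower_mult, Rinv_r, Rpower_1 by assumption. reflexivity. Qed.

Lemma Rpower_Rinv_base x y : 0 < x -> Rpower (/ x) y = / Rpower x y.
Proof. intros Hx. unfold Rpower. rewrite ln_Rinv, <- exp_Ropp by exact Hx. f_equal. ring. Qed.

Lemma pw_eq_Rpower x y : 0 < x -> pw x y = Rpower x y.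
Proof. intros Hx. unfold pw. destruct (Rle_dec x 0); [lra | reflexivity]. Qed.

Lemma pw_eq0 x y : x <= 0 -> pw x y = 0.
Proof. intros Hx. unfold pw. destruct (Rle_dec x 0); [reflexivity | lra]. Qed.

Lemma pw_gt0 x y : 0 < x -> 0 < pw x y.
Proof. intros Hx. rewrite pw_eq_Rpower by exact Hx. apply exp_pos. Qed.

Lemma pw_ge0 x y : 0 <= pw x y.
Proof.
  destruct (Rle_dec x 0) as [Hx | Hx].
  - rewrite pw_eq0 by exact Hx. lra.
  - left. apply pw_gt0. lra.
Qed.

Lemma pw_mul k x y : 0 < k -> pw (k * x) y = Rpower k y * pw x y.
Proof.
  intros Hk. destruct (Rle_dec x 0) as [Hx | Hx].
  - rewrite !pw_eq0 by nra. ring.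
  - rewrite !pw_eq_Rpower by nra. symmetry. apply Rpower_mult_distr; lra.
Qed.

Lemma pw_le_compat x1 x2 a : 0 <= a -> x1 <= x2 -> pw x1 a <= pw x2 a.
Proof.
  intros Ha Hx. destruct (Rle_dec x1 0) as [Hx1 | Hx1].
  - rewrite (pw_eq0 x1) by exact Hx1. apply pw_ge0.
  - rewrite !pw_eq_Rpower by lra. apply Rle_Rpower_l; lra.
Qed.

Lemma pw_le1 x p : 0 <= p -> x <= 1 -> pw x p <= 1.
Proof.
  intros Hp Hx. destruct (Rle_dec x 0) as [Hx0 | Hx0].
  - rewrite pw_eq0 by exact Hx0. lra.
  - rewrite pw_eq_Rpower by lra. apply Rpower_le1; lra.
Qed.

Lemma is_derive_Rpower x p : 0 < x -> is_derive (fun t => Rpower t p) x (p * Rpower x (p - 1)).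
Proof. intros Hx. apply is_derive_Reals, derivable_pt_lim_power, Hx. Qed.

Lemma is_derive_continuous (f : R -> R) x l : is_derive f x l -> continuous f x.
Proof. intros H. apply (ex_derive_continuous (V := R_NormedModule)). exists l. exact H. Qed.

Lemma is_derive_eq (f : R -> R) (x l l' : R) : is_derive f x l -> l = l' -> is_derive f x l'.
Proof. intros H <-. exact H. Qed.

Lemma MVT_in (f df : R -> R) l r a b :
  (forall x, l < x < r -> is_derive f x (df x)) -> l < a -> a <= b -> b < r ->
  exists c, a <= c <= b /\ f b - f a = df c * (b - a).
Proof.
  intros Hd Ha Hab Hb.
  destruct (MVT_gen f a b df) as [c [Hc Heq]].
  - intros t Ht. rewrite Rmin_left, Rmax_right in Ht by lra. apply Hd. lra.
  - intros t Ht. rewrite Rmin_left, Rmax_right in Ht by lra.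
    apply continuity_pt_filterlim, (is_derive_continuous f t (df t)), Hd. lra.
  - rewrite Rmin_left, Rmax_right in Hc by lra. exists c. split; assumption.
Qed.

Lemma nonincreasing_of_is_derive (f df : R -> R) l r a b :
  (forall x, l < x < r -> is_derive f x (df x)) -> (forall x, a <= x <= b -> df x <= 0) ->
  l < a -> a <= b -> b < r -> f b <= f a.
Proof.
  intros Hd Hneg Ha Hab Hb. destruct (MVT_in f df l r a b) as [c [Hc Heq]]; try assumption.
  specialize (Hneg c Hc). nra.
Qed.

Lemma nondecreasing_of_is_derive (f df : R -> R) l r a b :
  (forall x, l < x < r -> is_derive f x (df x)) -> (forall x, a <= x <= b -> 0 <= df x) ->
  l < a -> a <= b -> b < r -> f a <= f b.
Proof.
  intros Hd Hpos Ha Hab Hb. destruct (MVT_in f df l r a b) as [c [Hc Heq]]; try assumption.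
  specialize (Hpos c Hc). nra.
Qed.

Lemma pw_lipschitz p x y : 1 <= p -> x <= 1 -> y <= 1 ->
  Rabs (pw x p - pw y p) <= p * Rabs (x - y).
Proof.
  intros Hp.
  enough (H : forall x y, y <= x <= 1 -> Rabs (pw x p - pw y p) <= p * Rabs (x - y)).
  { intros Hx Hy. destruct (Rle_dec y x).
    - apply H. lra.
    - rewrite Rabs_minus_sym, (Rabs_minus_sym x). apply H. lra. }
  clear x y. intros x y Hxy. rewrite (Rabs_pos_eq (x - y)) by lra.
  destruct (Rle_dec x 0) as [Hx | Hx].
  { rewrite !pw_eq0 by lra. rewrite Rminus_0_r, Rabs_R0. nra. }
  destruct (Rle_dec y 0) as [Hy | Hy].
  - (* pw x p = x * x^(p-1) <= x *)
    rewrite (pw_eq0 y), Rminus_0_r, Rabs_pos_eq, pw_eq_Rpower by (lra || apply pw_ge0).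
    replace p with (1 + (p - 1)) at 1 by ring. rewrite Rpower_plus, Rpower_1 by lra.
    assert (Rpower x (p - 1) <= 1) by (apply Rpower_le1; lra).
    assert (0 < Rpower x (p - 1)) by apply exp_pos. nra.
  - rewrite !pw_eq_Rpower by lra.
    destruct (MVT_in (fun t => Rpower t p) (fun t => p * Rpower t (p - 1)) 0 2 y x)
      as [c [Hc ->]]; try lra.
    { intros t Ht. apply is_derive_Rpower. lra. }
    assert (Rpower c (p - 1) <= 1) by (apply Rpower_le1; lra).
    assert (0 < Rpower c (p - 1)) by apply exp_pos.
    assert (0 <= p * (x - y)) by nra.
    rewrite Rabs_pos_eq; nra.
Qed.

Lemma continuous_pw p z : 0 < p -> continuous (fun t => pw t p) z.
Proof.
  intros Hp. destruct (Rlt_dec 0 z) as [Hz | Hz].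
  - apply continuous_ext_loc with (fun t => Rpower t p).
    + assert (Hd : 0 < z / 2) by lra. exists (mkposreal _ Hd). intros t Ht.
      change (Rabs (t - z) < z / 2) in Ht. apply Rabs_def2 in Ht. symmetry. apply pw_eq_Rpower. lra.
    + eapply is_derive_continuous, is_derive_Rpower, Hz.
  - (* near a point z <= 0, pw t p < eps as soon as t < eps^(1/p) *)
    apply continuity_pt_filterlim. intros eps Heps.
    exists (Rpower eps (/ p)). split; [apply exp_pos |].
    intros t [_ Ht]. simpl in *. unfold R_dist in *.
    rewrite (pw_eq0 z), Rminus_0_r by lra. apply Rabs_def2 in Ht.
    destruct (Rle_dec t 0) as [Ht0 | Ht0].
    + rewrite pw_eq0, Rabs_R0 by exact Ht0. exact Heps.
    + rewrite Rabs_pos_eq, pw_eq_Rpower by (apply pw_ge0 || lra).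
      rewrite <- (Rpower_inv_r eps p) by lra. apply Rlt_Rpower_l; lra.
Qed.

Lemma gronwall_zero (E dE : R -> R) C l r x0 :
  (forall x, l < x < r -> is_derive E x (dE x)) -> (forall x, 0 <= E x) ->
  (forall x, l < x < r -> Rabs (dE x) <= C * E x) ->
  l < x0 < r -> E x0 = 0 -> forall x, l < x < r -> E x = 0.
Proof.
  intros HE HE0 HdE Hx0 E0 x Hx.
  assert (HG : forall c t, l < t < r ->
    is_derive (fun s => E s * exp (c * s)) t ((dE t + c * E t) * exp (c * t))).
  { intros c t Ht.
    replace ((dE t + c * E t) * exp (c * t)) with (dE t * exp (c * t) + E t * (c * exp (c * t)))
      by ring.
    apply (is_derive_mult E (fun s => exp (c * s))); [apply HE, Ht | | apply Rmult_comm].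
    auto_derive; [exact I | ring]. }
  assert (Hpos : forall c t, 0 <= E t * exp (c * t) <= 0 -> E t = 0).
  { intros c t [H1 H2]. pose proof (exp_pos (c * t)).
    apply Rmult_eq_reg_r with (exp (c * t)); lra. }
  (* E(t) exp(-C t) is nonincreasing and E(t) exp(C t) nondecreasing *)
  destruct (Rle_lt_dec x0 x) as [Hle | Hlt].
  - apply (Hpos (- C)). split; [apply Rmult_le_pos; [apply HE0 | left; apply exp_pos] |].
    rewrite <- (Rmult_0_l (exp (- C * x0))), <- E0.
    apply (nonincreasing_of_is_derive _ _ l r x0 x (HG (- C))); try lra.
    intros t Ht. specialize (HdE t ltac:(lra)). pose proof (Rle_abs (dE t)).
    rewrite <- (Rmult_0_l (exp (- C * t))). apply Rmult_le_compat_r; [left; apply exp_pos | lra].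
  - apply (Hpos C). split; [apply Rmult_le_pos; [apply HE0 | left; apply exp_pos] |].
    rewrite <- (Rmult_0_l (exp (C * x0))), <- E0.
    apply (nondecreasing_of_is_derive _ _ l r x x0 (HG C)); try lra.
    intros t Ht. specialize (HdE t ltac:(lra)). pose proof (Rle_abs (- dE t)).
    rewrite Rabs_Ropp in *. apply Rmult_le_pos; [lra | left; apply exp_pos].
Qed.

Lemma energy_deriv_bound d e q K : 0 <= K -> Rabs q <= K * Rabs d ->
  Rabs (2 * d * e + 2 * e * q) <= (1 + K) * (d * d + e * e).
Proof.
  intros HK Hq.
  assert (Hde : 2 * Rabs d * Rabs e <= d * d + e * e).
  { pose proof (Rsqr_abs d). pose proof (Rsqr_abs e).
    pose proof (Rle_0_sqr (Rabs d - Rabs e)). unfold Rsqr in *. lra. }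
  pose proof (Rabs_pos e). pose proof (Rabs_pos d).
  assert (Hq' : Rabs e * Rabs q <= K * (Rabs d * Rabs e)) by nra.
  eapply Rle_trans; [apply Rabs_triang |]. rewrite !Rabs_mult, Rabs_pos_eq by lra. nra.
Qed.

Lemma ode2_unique l r x0 K (y1 w1 F1 y2 w2 F2 : R -> R) :
  0 <= K -> l < x0 < r ->
  (forall x, l < x < r -> is_derive y1 x (w1 x) /\ is_derive w1 x (F1 x)) ->
  (forall x, l < x < r -> is_derive y2 x (w2 x) /\ is_derive w2 x (F2 x)) ->
  (forall x, l < x < r -> Rabs (F1 x - F2 x) <= K * Rabs (y1 x - y2 x)) ->
  y1 x0 = y2 x0 -> w1 x0 = w2 x0 -> forall x, l < x < r -> y1 x = y2 x.
Proof.
  intros HK Hx0 H1 H2 HF E0 W0 x Hx.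
  assert (Henergy : forall t, l < t < r ->
    (y1 t - y2 t) * (y1 t - y2 t) + (w1 t - w2 t) * (w1 t - w2 t) = 0).
  { apply (gronwall_zero _
      (fun t => 2 * (y1 t - y2 t) * (w1 t - w2 t) + 2 * (w1 t - w2 t) * (F1 t - F2 t))
      (1 + K) l r x0); try assumption.
    - intros t Ht. destruct (H1 t Ht) as [Hy1 Hw1], (H2 t Ht) as [Hy2 Hw2].
      pose proof (is_derive_minus _ _ _ _ _ Hy1 Hy2) as Hd.
      pose proof (is_derive_minus _ _ _ _ _ Hw1 Hw2) as He.
      pose proof (is_derive_plus _ _ _ _ _
        (is_derive_mult _ _ _ _ _ Hd Hd Rmult_comm)
        (is_derive_mult _ _ _ _ _ He He Rmult_comm)) as HE.
      eapply is_derive_eq; [exact HE |]. simpl. unfold minus, plus, opp, mult; simpl. ring.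
    - intros t. pose proof (Rle_0_sqr (y1 t - y2 t)). pose proof (Rle_0_sqr (w1 t - w2 t)).
      unfold Rsqr in *. lra.
    - intros t Ht. apply energy_deriv_bound, HF, Ht. exact HK.
    - rewrite E0, W0. ring. }
  specialize (Henergy x Hx). pose proof (Rle_0_sqr (y1 x - y2 x)).
  pose proof (Rle_0_sqr (w1 x - w2 x)). unfold Rsqr in *.
  assert (Hd : (y1 x - y2 x) * (y1 x - y2 x) = 0) by lra.
  apply Rmult_integral in Hd. lra.
Qed.

Lemma at_left_lim_eq0 (f g : R -> R) t a : t < a ->
  (forall x, t < x < a -> f x = g x) -> filterlim f (at_left a) (locally 0) ->
  continuous g a -> g a = 0.
Proof.
  intros Hta Hfg Hf Hg.
  apply (filterlim_locally_unique (F := at_left a) g).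
  - exact (filterlim_filter_le_1 _ (filter_le_within (F := locally _) _) Hg).
  - apply (filterlim_ext_loc f g); [| exact Hf].
    assert (Hd : 0 < a - t) by lra. exists (mkposreal _ Hd). intros y Hy Hya.
    change (Rabs (y - a) < a - t) in Hy. apply Rabs_def2 in Hy. apply Hfg. lra.
Qed.

Lemma at_right_lim_eq0 (f g : R -> R) t b : b < t ->
  (forall x, b < x < t -> f x = g x) -> filterlim f (at_right b) (locally 0) ->
  continuous g b -> g b = 0.
Proof.
  intros Hbt Hfg Hf Hg.
  apply (filterlim_locally_unique (F := at_right b) g).
  - exact (filterlim_filter_le_1 _ (filter_le_within (F := locally _) _) Hg).
  - apply (filterlim_ext_loc f g); [| exact Hf].
    assert (Hd : 0 < t - b) by lra. exists (mkposreal _ Hd). intros y Hy Hyb.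
    change (Rabs (y - b) < t - b) in Hy. apply Rabs_def2 in Hy. apply Hfg. lra.
Qed.

Lemma filterlim_rescale_within (D D' : R -> Prop) (f : R -> R) k c b : 0 < c ->
  (forall x, D x -> D' (c * x)) -> filterlim f (within D' (locally (c * b))) (locally 0) ->
  filterlim (fun x => k * f (c * x)) (within D (locally b)) (locally 0).
Proof.
  intros Hc HD Hf. rewrite <- (Rmult_0_r k).
  apply (filterlim_comp _ _ _ (fun x => f (c * x)) (fun y => k * y) _ (locally 0));
    [| apply (filterlim_scal_r k 0)].
  apply (filterlim_comp _ _ _ (fun x => c * x) f _ (within D' (locally (c * b)))); [| exact Hf].
  intros P [eps HP]. assert (Hd : 0 < eps / c) by (apply Rdiv_lt_0_compat; [apply cond_pos | lra]).
  exists (mkposreal _ Hd). intros y Hy HDy. apply HP; [| apply HD, HDy].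
  change (Rabs (c * y - c * b) < eps). change (Rabs (y - b) < eps / c) in Hy.
  rewrite <- Rmult_minus_distr_l, Rabs_mult, Rabs_pos_eq by lra.
  apply Rmult_lt_reg_r with (/ c); [apply Rinv_0_lt_compat, Hc |].
  replace (c * Rabs (y - b) * / c) with (Rabs (y - b)) by (field; lra). exact Hy.
Qed.

Lemma at_left_small (f : R -> R) m a eps : m < a -> 0 < eps ->
  filterlim f (at_left a) (locally 0) -> exists x, m < x < a /\ Rabs (f x) < eps.
Proof.
  intros Hma Heps Hf.
  assert (Hsmall := proj1 (filterlim_locally f 0) Hf (mkposreal _ Heps)).
  assert (Hd : 0 < a - m) by lra.
  assert (Hnear : at_left a (fun x => m < x < a)).
  { exists (mkposreal _ Hd). intros y Hy Hya.
    change (Rabs (y - a) < a - m) in Hy. apply Rabs_def2 in Hy. lra. }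
  destruct (filter_ex _ (filter_and _ _ Hnear Hsmall)) as [x [Hx Hfx]].
  exists x. split; [exact Hx |]. change (Rabs (f x - 0) < eps) in Hfx.
  rewrite Rminus_0_r in Hfx. exact Hfx.
Qed.

Lemma at_right_small (f : R -> R) m b eps : b < m -> 0 < eps ->
  filterlim f (at_right b) (locally 0) -> exists x, b < x < m /\ Rabs (f x) < eps.
Proof.
  intros Hbm Heps Hf.
  assert (Hrefl : filterlim (fun x => f (- x)) (at_left (- b)) (locally 0)).
  { apply (filterlim_comp _ _ _ Ropp f _ (at_right b)); [| exact Hf].
    rewrite <- (Ropp_involutive b) at 2. apply filterlim_Ropp_left. }
  destruct (at_left_small _ (- m) (- b) eps ltac:(lra) Heps Hrefl) as [x [Hx Hfx]].
  exists (- x). split; [lra | exact Hfx].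
Qed.

(** * Solutions of u'' + mu |x|^alpha u^p = 0 *)

Definition ef_sol (alpha p mu : R) (y y' : R -> R) (l r : R) : Prop :=
  forall x, l < x < r ->
    is_derive y x (y' x) /\ is_derive y' x (- (mu * pw (Rabs x) alpha * pw (y x) p)).

Definition pos_sol_on (alpha p mu : R) (y y' : R -> R) (l r : R) : Prop :=
  ef_sol alpha p mu y y' l r /\ (forall x, l < x < r -> 0 < y x) /\
  y l = 0 /\ y r = 0 /\
  filterlim y (at_right l) (locally 0) /\ filterlim y (at_left r) (locally 0).

Lemma pos_sol_iff alpha p lambda u :
  pos_sol alpha p lambda u <-> exists u', pos_sol_on alpha p lambda u u' (-1) 1.
Proof. unfold pos_sol, pos_sol_on, ef_sol. tauto. Qed.

Lemma ef_sol_1_iff alpha p (y y' : R -> R) l r :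
  ef_sol alpha p 1 y y' l r <->
  forall x, l < x < r ->
    is_derive y x (y' x) /\ is_derive y' x (- (pw (Rabs x) alpha * pw (y x) p)).
Proof.
  split; intros Hs x Hx; destruct (Hs x Hx) as [H1 H2];
    (split; [exact H1 | apply (is_derive_eq _ _ _ _ H2); ring]).
Qed.

Lemma ivp_roots_iff alpha p xi b a :
  ivp_roots alpha p xi b a <->
  b < xi < a /\ exists z z', pos_sol_on alpha p 1 z z' b a /\ z xi = 1 /\ z' xi = 0.
Proof.
  unfold ivp_roots, pos_sol_on. split.
  - intros [Hxi [z [z' [Hd Hz]]]]. split; [exact Hxi |].
    exists z, z'. rewrite ef_sol_1_iff. tauto.
  - intros [Hxi [z [z' [[Hd Hz] Hcrit]]]]. rewrite ef_sol_1_iff in Hd.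
    split; [exact Hxi |]. exists z, z'. tauto.
Qed.

Lemma pos_sol_on_rescale alpha p mu y y' l r k c : 0 < k -> 0 < c ->
  pos_sol_on alpha p mu y y' (c * l) (c * r) ->
  pos_sol_on alpha p (mu * Rpower c (alpha + 2) / Rpower k (p - 1))
    (fun x => k * y (c * x)) (fun x => k * c * y' (c * x)) l r.
Proof.
  intros Hk Hc [Hs [Hpos [Hl [Hr [Hlimr Hliml]]]]].
  assert (Hin : forall x, l < x < r -> c * l < c * x < c * r)
    by (intros x Hx; split; apply Rmult_lt_compat_l; lra).
  split; [| split; [| split; [| split; [| split]]]].
  - intros x Hx. destruct (Hs (c * x) (Hin x Hx)) as [D1 D2].
    assert (Hlin : is_derive (fun t => c * t) x c) by (auto_derive; [exact I | ring]).
    split.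
    + apply (is_derive_eq _ _ (k * (c * y' (c * x)))); [| ring].
      apply is_derive_scal, (is_derive_comp y (fun t => c * t)); assumption.
    + apply (is_derive_eq _ _ (k * c * (c * - (mu * pw (Rabs (c * x)) alpha * pw (y (c * x)) p)))).
      { apply is_derive_scal, (is_derive_comp y' (fun t => c * t)); assumption. }
      rewrite Rabs_mult, (Rabs_pos_eq c), !pw_mul by lra.
      replace (alpha + 2) with (alpha + 1 + 1) by ring.
      replace p with (p - 1 + 1) at 3 by ring.
      rewrite !Rpower_plus, !Rpower_1 by lra.
      field. apply Rgt_not_eq, exp_pos.
  - intros x Hx. apply Rmult_lt_0_compat; [exact Hk | apply Hpos, Hin, Hx].
  - rewrite Hl. ring.
  - rewrite Hr. ring.
  - apply (filterlim_rescale_within (fun x => l < x) (fun y => c * l < y)); try assumption.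
    intros x Hx. apply Rmult_lt_compat_l; assumption.
  - apply (filterlim_rescale_within (fun x => x < r) (fun y => y < c * r)); try assumption.
    intros x Hx. apply Rmult_lt_compat_l; assumption.
Qed.

Lemma ef_sol_reflect alpha p mu y y' l r : ef_sol alpha p mu y y' l r ->
  ef_sol alpha p mu (fun x => y (- x)) (fun x => - y' (- x)) (- r) (- l).
Proof.
  intros Hs x Hx. destruct (Hs (- x) ltac:(lra)) as [D1 D2].
  assert (Hopp : is_derive (fun t => - t) x (-1)) by (auto_derive; [exact I | ring]).
  split.
  - apply (is_derive_eq _ _ (-1 * y' (- x))); [| ring].
    apply (is_derive_comp y (fun t => - t)); assumption.
  - apply (is_derive_eq _ _ (- (-1 * - (mu * pw (Rabs (- x)) alpha * pw (y (- x)) p)))).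
    { apply (is_derive_opp (fun t => y' (- t))), (is_derive_comp y' (fun t => - t)); assumption. }
    rewrite Rabs_Ropp. ring.
Qed.

Lemma pos_sol_on_reflect alpha p mu y y' l r : pos_sol_on alpha p mu y y' l r ->
  pos_sol_on alpha p mu (fun x => y (- x)) (fun x => - y' (- x)) (- r) (- l).
Proof.
  intros [Hs [Hpos [Hl [Hr [Hlimr Hliml]]]]].
  split; [| split; [| split; [| split; [| split]]]].
  - apply ef_sol_reflect, Hs.
  - intros x Hx. apply Hpos. lra.
  - rewrite Ropp_involutive. exact Hr.
  - rewrite Ropp_involutive. exact Hl.
  - apply (filterlim_comp _ _ _ Ropp y _ (at_left r)); [| exact Hliml].
    rewrite <- (Ropp_involutive r) at 2. apply filterlim_Ropp_right.
  - apply (filterlim_comp _ _ _ Ropp y _ (at_right l)); [| exact Hlimr].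
    rewrite <- (Ropp_involutive l) at 2. apply filterlim_Ropp_left.
Qed.

Lemma pos_sol_on_crit alpha p mu y y' l r : l < r -> pos_sol_on alpha p mu y y' l r ->
  exists t, l < t < r /\ y' t = 0.
Proof.
  intros Hlr [Hs [Hpos [_ [_ [Hlimr Hliml]]]]].
  set (m := (l + r) / 2). assert (Hm : 0 < y m) by (apply Hpos; unfold m; lra).
  assert (Hd : forall x, l < x < r -> is_derive y x (y' x)) by (intros x Hx; apply Hs, Hx).
  destruct (at_left_small y m r (y m)) as [s1 [Hs1 Hys1]]; try (unfold m; lra); try assumption.
  destruct (at_right_small y m l (y m)) as [s0 [Hs0 Hys0]]; try (unfold m; lra); try assumption.
  pose proof (Rle_abs (y s1)). pose proof (Rle_abs (y s0)).
  destruct (MVT_in y y' l r m s1 Hd) as [c1 [Hc1 Heq1]]; try (unfold m in *; lra).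
  destruct (MVT_in y y' l r s0 m Hd) as [c0 [Hc0 Heq0]]; try (unfold m in *; lra).
  assert (Hneg : y' c1 < 0) by nra. assert (Hpos0 : 0 < y' c0) by nra.
  assert (Hc : c0 < c1) by (destruct (Req_dec c0 c1); [subst; lra | lra]).
  destruct (Ranalysis5.IVT_interv (fun x => - y' x) c0 c1) as [t [Ht Hyt]]; try lra.
  - intros x Hx. apply continuity_pt_filterlim.
    apply (is_derive_continuous _ _ _ (is_derive_opp _ _ _ (proj2 (Hs x ltac:(lra))))).
  - exists t. split; lra.
Qed.

Lemma concave_le_crit (y y' y'' : R -> R) l r t :
  (forall x, l < x < r -> is_derive y x (y' x) /\ is_derive y' x (y'' x)) ->
  (forall x, l < x < r -> y'' x <= 0) -> l < t < r -> y' t = 0 ->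
  forall x, l < x < r -> y x <= y t.
Proof.
  intros Hd Hconc Ht Hcrit x Hx.
  assert (Hd1 : forall s, l < s < r -> is_derive y s (y' s)) by (intros s Hs; apply Hd, Hs).
  assert (Hd2 : forall s, l < s < r -> is_derive y' s (y'' s)) by (intros s Hs; apply Hd, Hs).
  destruct (Rle_dec x t) as [Hxt | Hxt].
  - apply (nondecreasing_of_is_derive y y' l r x t Hd1); try lra.
    intros s Hs. rewrite <- Hcrit. apply (nonincreasing_of_is_derive y' y'' l r s t Hd2); try lra.
    intros u Hu. apply Hconc. lra.
  - apply (nonincreasing_of_is_derive y y' l r t x Hd1); try lra.
    intros s Hs. rewrite <- Hcrit. apply (nonincreasing_of_is_derive y' y'' l r t s Hd2); try lra.
    intros u Hu. apply Hconc. lra.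
Qed.

Section Solutions.

Variables alpha p : R.
Hypothesis alpha_gt0 : 0 < alpha.
Hypothesis p_ge1 : 1 <= p.

Lemma ef_rhs_le0 mu x u : 0 <= mu -> - (mu * pw (Rabs x) alpha * pw u p) <= 0.
Proof.
  intros Hmu. pose proof (pw_ge0 (Rabs x) alpha). pose proof (pw_ge0 u p).
  assert (0 <= mu * pw (Rabs x) alpha) by (apply Rmult_le_pos; assumption).
  assert (0 <= mu * pw (Rabs x) alpha * pw u p) by (apply Rmult_le_pos; assumption). lra.
Qed.

Lemma weighted_pw_lipschitz L x u v : Rabs x <= L -> u <= 1 -> v <= 1 ->
  Rabs (pw (Rabs x) alpha * pw u p - pw (Rabs x) alpha * pw v p) <= pw L alpha * p * Rabs (u - v).
Proof.
  intros HxL Hu Hv.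
  rewrite <- Rmult_minus_distr_l, Rabs_mult, Rabs_pos_eq, Rmult_assoc by apply pw_ge0.
  apply Rmult_le_compat; try apply pw_ge0; try apply Rabs_pos.
  - apply pw_le_compat; lra.
  - apply pw_lipschitz; assumption.
Qed.

Lemma ef_sol_deriv_nonincr mu y y' l r a b : 0 <= mu -> ef_sol alpha p mu y y' l r ->
  l < a -> a <= b -> b < r -> y' b <= y' a.
Proof.
  intros Hmu Hs Ha Hab Hb.
  apply (nonincreasing_of_is_derive y' (fun x => - (mu * pw (Rabs x) alpha * pw (y x) p)) l r);
    try assumption.
  - intros x Hx. apply Hs, Hx.
  - intros x _. apply ef_rhs_le0, Hmu.
Qed.

Lemma ef_sol_le_crit mu y y' l r t : 0 <= mu -> ef_sol alpha p mu y y' l r ->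
  l < t < r -> y' t = 0 -> forall x, l < x < r -> y x <= y t.
Proof.
  intros Hmu Hs. apply (concave_le_crit y y' (fun x => - (mu * pw (Rabs x) alpha * pw (y x) p))).
  - exact Hs.
  - intros x _. apply ef_rhs_le0, Hmu.
Qed.

Lemma pos_sol_on_le_crit mu y y' l r t : 0 <= mu -> pos_sol_on alpha p mu y y' l r ->
  l < t < r -> y' t = 0 -> forall x, l <= x <= r -> y x <= y t.
Proof.
  intros Hmu [Hs [Hpos [Hl [Hr _]]]] Ht Hcrit x Hx.
  assert (Hyt : 0 < y t) by (apply Hpos, Ht).
  destruct (Req_dec x l) as [-> | Hxl]; [lra |].
  destruct (Req_dec x r) as [-> | Hxr]; [lra |].
  apply (ef_sol_le_crit mu y y' l r); try assumption. lra.
Qed.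

Lemma pos_sol_on_deriv_pos mu y y' l r t : 0 < mu -> pos_sol_on alpha p mu y y' l r ->
  0 < t < r -> y' t = 0 -> forall x, l < x < t -> 0 < y' x.
Proof.
  intros Hmu [Hs [Hpos _]] Ht Hcrit.
  (* on (0, t) the right-hand side is strictly negative, so y' decreases strictly to 0 *)
  assert (Hright : forall s, l < s -> 0 < s < t -> 0 < y' s).
  { intros s Hls Hs'.
    destruct (MVT_in y' (fun x => - (mu * pw (Rabs x) alpha * pw (y x) p)) l r s t)
      as [c [Hc Heq]]; try lra.
    - intros x Hx. apply Hs, Hx.
    - assert (0 < pw (Rabs c) alpha) by (apply pw_gt0; rewrite Rabs_pos_eq; lra).
      assert (0 < pw (y c) p) by (apply pw_gt0, Hpos; lra).
      assert (0 < mu * pw (Rabs c) alpha * pw (y c) p)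
        by (apply Rmult_lt_0_compat; [apply Rmult_lt_0_compat |]; assumption).
      rewrite Hcrit in Heq. nra. }
  intros x Hx. destruct (Rlt_dec 0 x) as [Hx0 | Hx0]; [apply Hright; lra |].
  apply Rlt_le_trans with (y' (t / 2)); [apply Hright; lra |].
  apply (ef_sol_deriv_nonincr mu y y' l r _ _ (Rlt_le _ _ Hmu) Hs); lra.
Qed.

Lemma pos_sol_on_lt_crit mu y y' l r t : 0 < mu -> pos_sol_on alpha p mu y y' l r ->
  0 < t < r -> y' t = 0 -> forall s, l < s < t -> y s < y t.
Proof.
  intros Hmu Hsol Ht Hcrit s Hs.
  pose proof (pos_sol_on_deriv_pos mu y y' l r t Hmu Hsol Ht Hcrit) as Hder.
  destruct Hsol as [Hef _].
  set (m := (s + t) / 2).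
  destruct (MVT_in y y' l r s m) as [c [Hc Heq]]; try (unfold m; lra).
  { intros x Hx. apply Hef, Hx. }
  assert (0 < y' c) by (apply Hder; unfold m in *; lra).
  assert (y m <= y t)
    by (apply (ef_sol_le_crit mu y y' l r t (Rlt_le _ _ Hmu) Hef); try lra; unfold m; lra).
  unfold m in *. nra.
Qed.

Lemma ef_sol_unique mu y1 y1' y2 y2' l r t : 0 <= mu ->
  ef_sol alpha p mu y1 y1' l r -> ef_sol alpha p mu y2 y2' l r -> l < t < r ->
  (forall x, l < x < r -> y1 x <= 1) -> (forall x, l < x < r -> y2 x <= 1) ->
  y1 t = y2 t -> y1' t = y2' t -> forall x, l < x < r -> y1 x = y2 x.
Proof.
  intros Hmu Hs1 Hs2 Ht Hb1 Hb2 E0 W0.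
  apply (ode2_unique l r t (mu * (pw (Rabs l + Rabs r) alpha * p)) y1 y1'
    (fun x => - (mu * pw (Rabs x) alpha * pw (y1 x) p)) y2 y2'
    (fun x => - (mu * pw (Rabs x) alpha * pw (y2 x) p))); try assumption.
  - pose proof (pw_ge0 (Rabs l + Rabs r) alpha).
    apply Rmult_le_pos; [| apply Rmult_le_pos]; lra.
  - intros x Hx.
    replace (- (mu * pw (Rabs x) alpha * pw (y1 x) p) - - (mu * pw (Rabs x) alpha * pw (y2 x) p))
      with (mu * - (pw (Rabs x) alpha * pw (y1 x) p - pw (Rabs x) alpha * pw (y2 x) p)) by ring.
    rewrite Rabs_mult, Rabs_Ropp, Rabs_pos_eq, Rmult_assoc by exact Hmu.
    apply Rmult_le_compat_l; [exact Hmu |].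
    apply weighted_pw_lipschitz; [| apply Hb1, Hx | apply Hb2, Hx].
    destruct (Rle_dec 0 x);
      [rewrite Rabs_pos_eq by lra; pose proof (Rle_abs r) | rewrite Rabs_left by lra;
       pose proof (Rle_abs (- l)); rewrite Rabs_Ropp in *];
      pose proof (Rabs_pos l); pose proof (Rabs_pos r); lra.
Qed.

Lemma pos_sol_on_right_end mu y1 y1' l1 r1 y2 y2' l2 r2 t :
  pos_sol_on alpha p mu y1 y1' l1 r1 -> pos_sol_on alpha p mu y2 y2' l2 r2 ->
  l2 < t < r1 -> (forall x, t < x < Rmin r1 r2 -> y1 x = y2 x) -> r2 <= r1.
Proof.
  intros [_ [_ [_ [_ [_ Hlim1]]]]] [Hs2 [Hpos2 _]] Ht Heq.
  destruct (Rle_dec r2 r1) as [| Hlt]; [assumption | exfalso].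
  assert (Hzero : y2 r1 = 0).
  { apply (at_left_lim_eq0 y1 y2 t r1); try lra.
    - intros x Hx. apply Heq. rewrite Rmin_left by lra. exact Hx.
    - exact Hlim1.
    - apply (is_derive_continuous _ _ _ (proj1 (Hs2 r1 ltac:(lra)))). }
  specialize (Hpos2 r1 ltac:(lra)). lra.
Qed.

Lemma pos_sol_on_left_end mu y1 y1' l1 r1 y2 y2' l2 r2 t :
  pos_sol_on alpha p mu y1 y1' l1 r1 -> pos_sol_on alpha p mu y2 y2' l2 r2 ->
  l1 < t < r2 -> (forall x, Rmax l1 l2 < x < t -> y1 x = y2 x) -> l1 <= l2.
Proof.
  intros [_ [_ [_ [_ [Hlim1 _]]]]] [Hs2 [Hpos2 _]] Ht Heq.
  destruct (Rle_dec l1 l2) as [| Hlt]; [assumption | exfalso].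
  assert (Hzero : y2 l1 = 0).
  { apply (at_right_lim_eq0 y1 y2 t l1); try lra.
    - intros x Hx. apply Heq. rewrite Rmax_left by lra. exact Hx.
    - exact Hlim1.
    - apply (is_derive_continuous _ _ _ (proj1 (Hs2 l1 ltac:(lra)))). }
  specialize (Hpos2 l1 ltac:(lra)). lra.
Qed.

Lemma pos_sol_on_agree mu y1 y1' l1 r1 y2 y2' l2 r2 t : 0 <= mu ->
  pos_sol_on alpha p mu y1 y1' l1 r1 -> pos_sol_on alpha p mu y2 y2' l2 r2 ->
  l1 < t < r1 -> l2 < t < r2 -> y1 t = 1 -> y2 t = 1 -> y1' t = 0 -> y2' t = 0 ->
  forall x, Rmax l1 l2 < x < Rmin r1 r2 -> y1 x = y2 x.
Proof.
  intros Hmu [Hs1 _] [Hs2 _] Ht1 Ht2 V1 V2 D1 D2.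
  pose proof (Rmax_l l1 l2). pose proof (Rmax_r l1 l2).
  pose proof (Rmin_l r1 r2). pose proof (Rmin_r r1 r2).
  apply (ef_sol_unique mu y1 y1' y2 y2' (Rmax l1 l2) (Rmin r1 r2) t); try (assumption || lra).
  - intros x Hx. apply Hs1. lra.
  - intros x Hx. apply Hs2. lra.
  - split; [apply Rmax_lub_lt | apply Rmin_glb_lt]; lra.
  - intros x Hx. rewrite <- V1. apply (ef_sol_le_crit mu y1 y1' l1 r1 t Hmu Hs1); lra.
  - intros x Hx. rewrite <- V2. apply (ef_sol_le_crit mu y2 y2' l2 r2 t Hmu Hs2); lra.
Qed.

Lemma pos_sol_on_unique mu y1 y1' l1 r1 y2 y2' l2 r2 t : 0 <= mu ->
  pos_sol_on alpha p mu y1 y1' l1 r1 -> pos_sol_on alpha p mu y2 y2' l2 r2 ->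
  l1 < t < r1 -> l2 < t < r2 -> y1 t = 1 -> y2 t = 1 -> y1' t = 0 -> y2' t = 0 ->
  l1 = l2 /\ r1 = r2 /\ forall x, l1 <= x <= r1 -> y1 x = y2 x.
Proof.
  intros Hmu Hsol1 Hsol2 Ht1 Ht2 V1 V2 D1 D2.
  pose proof (pos_sol_on_agree mu y1 y1' l1 r1 y2 y2' l2 r2 t) as Heq.
  assert (Er : r1 = r2).
  { apply Rle_antisym.
    - apply (pos_sol_on_right_end mu y2 y2' l2 r2 y1 y1' l1 r1 t); try (assumption || lra).
      intros x Hx. rewrite Rmin_comm in Hx. symmetry.
      apply Heq; try assumption. split; [apply Rmax_lub_lt |]; lra.
    - apply (pos_sol_on_right_end mu y1 y1' l1 r1 y2 y2' l2 r2 t); try (assumption || lra).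
      intros x Hx. apply Heq; try assumption. split; [apply Rmax_lub_lt |]; lra. }
  assert (El : l1 = l2).
  { apply Rle_antisym.
    - apply (pos_sol_on_left_end mu y1 y1' l1 r1 y2 y2' l2 r2 t); try (assumption || lra).
      intros x Hx. apply Heq; try assumption. split; [| apply Rmin_glb_lt]; lra.
    - apply (pos_sol_on_left_end mu y2 y2' l2 r2 y1 y1' l1 r1 t); try (assumption || lra).
      intros x Hx. rewrite Rmax_comm in Hx. symmetry.
      apply Heq; try assumption. split; [| apply Rmin_glb_lt]; lra. }
  split; [exact El | split; [exact Er |]].
  intros x Hx. pose proof Hsol1 as [_ [_ [Hl1 [Hr1 _]]]]. pose proof Hsol2 as [_ [_ [Hl2 [Hr2 _]]]].
  destruct (Req_dec x l1) as [-> | Hxl]; [congruence |].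
  destruct (Req_dec x r1) as [-> | Hxr]; [congruence |].
  apply Heq; try assumption. rewrite <- El, <- Er, Rmax_left, Rmin_left; lra.
Qed.

End Solutions.

(** * The even solution, by Picard iteration *)

Lemma abs_le_of_is_derive_le (F dF G dG : R -> R) l r a b :
  (forall x, l < x < r -> is_derive F x (dF x)) -> (forall x, l < x < r -> is_derive G x (dG x)) ->
  (forall x, a <= x <= b -> Rabs (dF x) <= dG x) -> l < a -> a <= b -> b < r ->
  Rabs (F a) <= G a -> Rabs (F b) <= G b.
Proof.
  intros HF HG Hd Ha Hab Hb H0.
  assert (Hm : G a - F a <= G b - F b).
  { apply (nondecreasing_of_is_derive (fun x => G x - F x) (fun x => dG x - dF x) l r);
      try assumption.
    - intros x Hx. apply (is_derive_minus G F); [apply HG | apply HF]; exact Hx.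
    - intros x Hx. specialize (Hd x Hx). pose proof (Rle_abs (dF x)). lra. }
  assert (Hp : G a + F a <= G b + F b).
  { apply (nondecreasing_of_is_derive (fun x => G x + F x) (fun x => dG x + dF x) l r);
      try assumption.
    - intros x Hx. apply (is_derive_plus G F); [apply HG | apply HF]; exact Hx.
    - intros x Hx. specialize (Hd x Hx). pose proof (Rle_abs (- dF x)).
      rewrite Rabs_Ropp in *. lra. }
  pose proof (Rle_abs (F a)). pose proof (Rle_abs (- F a)). rewrite Rabs_Ropp in *.
  apply Rabs_le. lra.
Qed.

Lemma abs_le_of_is_derive_ge (F dF G dG : R -> R) l r a b :
  (forall x, l < x < r -> is_derive F x (dF x)) -> (forall x, l < x < r -> is_derive G x (dG x)) ->
  (forall x, a <= x <= b -> Rabs (dF x) <= - dG x) -> l < a -> a <= b -> b < r ->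
  Rabs (F b) <= G b -> Rabs (F a) <= G a.
Proof.
  intros HF HG Hd Ha Hab Hb H0.
  assert (Hm : G b - F b <= G a - F a).
  { apply (nonincreasing_of_is_derive (fun x => G x - F x) (fun x => dG x - dF x) l r);
      try assumption.
    - intros x Hx. apply (is_derive_minus G F); [apply HG | apply HF]; exact Hx.
    - intros x Hx. specialize (Hd x Hx). pose proof (Rle_abs (- dF x)).
      rewrite Rabs_Ropp in *. lra. }
  assert (Hp : G b + F b <= G a + F a).
  { apply (nonincreasing_of_is_derive (fun x => G x + F x) (fun x => dG x + dF x) l r);
      try assumption.
    - intros x Hx. apply (is_derive_plus G F); [apply HG | apply HF]; exact Hx.
    - intros x Hx. specialize (Hd x Hx). pose proof (Rle_abs (dF x)). lra. }
  pose proof (Rle_abs (F b)). pose proof (Rle_abs (- F b)). rewrite Rabs_Ropp in *.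
  apply Rabs_le. lra.
Qed.

Lemma ex_RInt_of_continuous (f : R -> R) a b : (forall y, continuous f y) -> ex_RInt f a b.
Proof.
  intros Hf. apply (ex_RInt_continuous (V := R_CompleteNormedModule)). intros z _. apply Hf.
Qed.

Lemma is_derive_RInt_from0 (f : R -> R) x : (forall y, continuous f y) ->
  is_derive (fun t => RInt f 0 t) x (f x).
Proof.
  intros Hf. apply (is_derive_RInt (V := R_CompleteNormedModule) f (fun t => RInt f 0 t) 0 x);
    [| apply Hf].
  apply filter_forall. intros b.
  apply (RInt_correct (V := R_CompleteNormedModule)), ex_RInt_of_continuous, Hf.
Qed.

Lemma continuous_RInt_from0 (f : R -> R) x : (forall y, continuous f y) ->
  continuous (fun t => RInt f 0 t) x.
Proof. intros Hf. exact (is_derive_continuous _ _ _ (is_derive_RInt_from0 f x Hf)). Qed.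

Lemma RInt_exp_bound (f : R -> R) x B c : 0 < c -> (forall y, continuous f y) ->
  (forall s, Rabs s <= Rabs x -> Rabs (f s) <= B * exp (c * Rabs s)) ->
  Rabs (RInt f 0 x) <= B * exp (c * Rabs x) / c.
Proof.
  intros Hc Hf Hb.
  assert (HB : 0 <= B).
  { specialize (Hb 0 ltac:(rewrite Rabs_R0; apply Rabs_pos)).
    rewrite Rabs_R0, Rmult_0_r, exp_0, Rmult_1_r in Hb. pose proof (Rabs_pos (f 0)). lra. }
  assert (H0 : Rabs (RInt f 0 0) <= B / c).
  { rewrite RInt_point. change (Rabs 0 <= B / c). rewrite Rabs_R0. apply Rdiv_le_0_compat; lra. }
  destruct (Rle_dec 0 x) as [Hx | Hx].
  - rewrite (Rabs_pos_eq x) by exact Hx.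
    apply (abs_le_of_is_derive_le _ f (fun s => B * exp (c * s) / c)
             (fun s => B * exp (c * s)) (-1) (x + 1) 0 x); try lra.
    + intros s _. apply is_derive_RInt_from0, Hf.
    + intros s _. auto_derive; [exact I | field; lra].
    + intros s Hs. replace (c * s) with (c * Rabs s) by (rewrite Rabs_pos_eq; lra).
      apply Hb. rewrite !Rabs_pos_eq; lra.
    + cbv beta. rewrite Rmult_0_r, exp_0, Rmult_1_r. exact H0.
  - rewrite (Rabs_left x) by lra. replace (c * - x) with (- c * x) by ring.
    apply (abs_le_of_is_derive_ge _ f (fun s => B * exp (- c * s) / c)
             (fun s => - (B * exp (- c * s))) (x - 1) 1 x 0); try lra.
    + intros s _. apply is_derive_RInt_from0, Hf.
    + intros s _. auto_derive; [exact I | field; lra].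
    + intros s Hs. rewrite Ropp_involutive.
      replace (- c * s) with (c * Rabs s) by (rewrite Rabs_left1 by lra; ring).
      apply Hb. rewrite (Rabs_left1 s), (Rabs_left x) by lra. lra.
    + cbv beta. rewrite Rmult_0_r, exp_0, Rmult_1_r. exact H0.
Qed.

Lemma RInt2_exp_bound (f : R -> R) x B c : 0 < c -> (forall y, continuous f y) ->
  (forall s, Rabs s <= Rabs x -> Rabs (f s) <= B * exp (c * Rabs s)) ->
  Rabs (RInt (fun t => RInt f 0 t) 0 x) <= B * exp (c * Rabs x) / (c * c).
Proof.
  intros Hc Hf Hb.
  replace (B * exp (c * Rabs x) / (c * c)) with (B / c * exp (c * Rabs x) / c) by (field; lra).
  apply RInt_exp_bound; [exact Hc | intros y; apply continuous_RInt_from0, Hf |].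
  intros t Ht. replace (B / c * exp (c * Rabs t)) with (B * exp (c * Rabs t) / c) by (field; lra).
  apply RInt_exp_bound; [exact Hc | exact Hf |]. intros s Hs. apply Hb. lra.
Qed.

Lemma pow_half_small A eps : 0 < eps -> exists N, forall n, (N <= n)%nat -> A * (/ 2) ^ n < eps.
Proof.
  intros He.
  assert (Hy : 0 < eps / (Rabs A + 1)) by (apply Rdiv_lt_0_compat; pose proof (Rabs_pos A); lra).
  destruct (pow_lt_1_zero (/ 2) ltac:(rewrite Rabs_pos_eq; lra) _ Hy) as [N HN].
  exists N. intros n Hn. specialize (HN n Hn). rewrite Rabs_pos_eq in HN by (apply pow_le; lra).
  pose proof (Rle_abs A). pose proof (Rabs_pos A). pose proof (pow_le (/ 2) n ltac:(lra)).
  apply Rle_lt_trans with (Rabs A * (/ 2) ^ n); [apply Rmult_le_compat_r; assumption |].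
  apply Rle_lt_trans with (Rabs A * (eps / (Rabs A + 1))); [apply Rmult_le_compat_l; lra |].
  apply Rmult_lt_reg_r with (Rabs A + 1); [lra |]. field_simplify; nra.
Qed.

Lemma exp_le_compat x y : x <= y -> exp x <= exp y.
Proof. intros [Hlt | ->]; [left; apply exp_increasing, Hlt | right; reflexivity]. Qed.

Lemma le0_of_le_geom a C : (forall n, a <= C * (/ 2) ^ n) -> a <= 0.
Proof.
  intros H. destruct (Rle_dec a 0) as [| Ha]; [assumption | exfalso].
  destruct (pow_half_small C a ltac:(lra)) as [N HN]. specialize (HN N (le_n N)).
  specialize (H N). lra.
Qed.

Lemma Rmin1_lipschitz u v : Rabs (Rmin u 1 - Rmin v 1) <= Rabs (u - v).
Proof.
  unfold Rmin. destruct (Rle_dec u 1), (Rle_dec v 1); unfold Rabs; repeat destruct Rcase_abs; lra.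
Qed.

Lemma continuous_Rmin1 x : continuous (fun y => Rmin y 1) x.
Proof.
  apply continuity_pt_filterlim. intros eps Heps. exists eps. split; [exact Heps |].
  intros y [_ Hy]. eapply Rle_lt_trans; [apply Rmin1_lipschitz | exact Hy].
Qed.

Section PicardIteration.

Variables alpha p : R.
Hypothesis alpha_gt0 : 0 < alpha.
Hypothesis p_ge1 : 1 <= p.

(* Truncating the nonlinearity at 1 makes it globally Lipschitz; the limit
   stays below 1, where the truncation is inactive. *)
Definition trunc_rhs (phi : R -> R) (s : R) : R := pw (Rabs s) alpha * pw (Rmin (phi s) 1) p.

Definition picard (phi : R -> R) (x : R) : R :=
  1 - RInt (fun t => RInt (trunc_rhs phi) 0 t) 0 x.

Fixpoint picard_iter (n : nat) : R -> R :=
  match n with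
  | O => fun _ => 1
  | S m => picard (picard_iter m)
  end.

Definition rhs_lip (L : R) : R := pw L alpha * p.

Definition rate (L : R) : R := 2 * rhs_lip L + 2.

Lemma rhs_lip_ge0 L : 0 <= rhs_lip L.
Proof. unfold rhs_lip. pose proof (pw_ge0 L alpha). apply Rmult_le_pos; lra. Qed.

Lemma rate_gt0 L : 0 < rate L.
Proof. unfold rate. pose proof (rhs_lip_ge0 L). lra. Qed.

Lemma rhs_lip_le_rate L : rhs_lip L / (rate L * rate L) <= / 2.
Proof.
  pose proof (rhs_lip_ge0 L) as HK. pose proof (rate_gt0 L) as Hc.
  apply Rmult_le_reg_r with (2 * (rate L * rate L)); [nra |].
  field_simplify; [unfold rate; nra | lra].
Qed.

Definition picard_base (L : R) : R := pw L alpha / (rate L * rate L).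

Definition picard_const (L : R) : R := picard_base L * exp (rate L * L).

Lemma picard_base_ge0 L : 0 <= picard_base L.
Proof.
  unfold picard_base. pose proof (pw_ge0 L alpha). pose proof (rate_gt0 L).
  apply Rdiv_le_0_compat; nra.
Qed.

Lemma picard_const_ge0 L : 0 <= picard_const L.
Proof.
  unfold picard_const. pose proof (picard_base_ge0 L). pose proof (exp_pos (rate L * L)).
  apply Rmult_le_pos; lra.
Qed.

Lemma continuous_trunc_rhs phi x : (forall y, continuous phi y) ->
  continuous (trunc_rhs phi) x.
Proof.
  intros Hphi.
  apply (continuous_mult (K := R_AbsRing) (fun s => pw (Rabs s) alpha)
           (fun s => pw (Rmin (phi s) 1) p)).
  - apply (continuous_comp Rabs (fun t => pw t alpha));
      [apply continuous_Rabs | apply continuous_pw, alpha_gt0].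
  - apply (continuous_comp (fun s => Rmin (phi s) 1) (fun t => pw t p));
      [| apply continuous_pw; lra].
    apply (continuous_comp phi (fun t => Rmin t 1)); [apply Hphi | apply continuous_Rmin1].
Qed.

Lemma trunc_rhs_ge0 phi s : 0 <= trunc_rhs phi s.
Proof. apply Rmult_le_pos; apply pw_ge0. Qed.

Lemma trunc_rhs_bound phi s L : Rabs s <= L -> 0 <= trunc_rhs phi s <= pw L alpha.
Proof.
  intros Hs. split; [apply trunc_rhs_ge0 |]. unfold trunc_rhs.
  pose proof (pw_ge0 (Rabs s) alpha). pose proof (pw_ge0 (Rmin (phi s) 1) p).
  pose proof (pw_le1 (Rmin (phi s) 1) p ltac:(lra) (Rmin_r _ _)).
  assert (pw (Rabs s) alpha <= pw L alpha) by (apply pw_le_compat; lra). nra.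
Qed.

Lemma trunc_rhs_lipschitz phi psi s L : Rabs s <= L ->
  Rabs (trunc_rhs phi s - trunc_rhs psi s) <= rhs_lip L * Rabs (phi s - psi s).
Proof.
  intros Hs. unfold trunc_rhs, rhs_lip.
  eapply Rle_trans; [apply (weighted_pw_lipschitz alpha p alpha_gt0 p_ge1); try exact Hs;
    apply Rmin_r |].
  apply Rmult_le_compat_l; [apply Rmult_le_pos; [apply pw_ge0 | lra] | apply Rmin1_lipschitz].
Qed.

Lemma is_derive_picard phi x : (forall y, continuous phi y) ->
  is_derive (picard phi) x (- RInt (trunc_rhs phi) 0 x).
Proof.
  intros Hphi. unfold picard.
  apply (is_derive_eq _ _ (0 - RInt (trunc_rhs phi) 0 x)); [| ring].
  apply (is_derive_minus (fun _ => 1)); [auto_derive; reflexivity |].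
  apply is_derive_RInt_from0. intros y. apply continuous_RInt_from0. intros z.
  apply continuous_trunc_rhs, Hphi.
Qed.

Lemma continuous_picard_iter n x : continuous (picard_iter n) x.
Proof.
  revert x. induction n as [| n IH]; intros x; simpl.
  - apply continuous_const.
  - exact (is_derive_continuous _ _ _ (is_derive_picard _ x IH)).
Qed.

Lemma picard_diff phi psi x : (forall y, continuous phi y) -> (forall y, continuous psi y) ->
  picard phi x - picard psi x =
  - RInt (fun t => RInt (fun s => trunc_rhs phi s - trunc_rhs psi s) 0 t) 0 x.
Proof.
  intros Hphi Hpsi. unfold picard.
  assert (H1 : forall y, continuous (trunc_rhs phi) y)
    by (intros; apply continuous_trunc_rhs, Hphi).
  assert (H2 : forall y, continuous (trunc_rhs psi) y)
    by (intros; apply continuous_trunc_rhs, Hpsi).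
  rewrite (RInt_ext (fun t => RInt (fun s => trunc_rhs phi s - trunc_rhs psi s) 0 t)
    (fun t => RInt (trunc_rhs phi) 0 t - RInt (trunc_rhs psi) 0 t))
    by (intros t _; apply (RInt_minus (V := R_CompleteNormedModule));
        apply ex_RInt_of_continuous; assumption).
  rewrite (RInt_minus (V := R_CompleteNormedModule))
    by (apply ex_RInt_of_continuous; intros; apply continuous_RInt_from0; assumption).
  change (RInt (RInt (trunc_rhs phi) 0) 0 x) with (RInt (fun t => RInt (trunc_rhs phi) 0 t) 0 x).
  change (RInt (RInt (trunc_rhs psi) 0) 0 x) with (RInt (fun t => RInt (trunc_rhs psi) 0 t) 0 x).
  unfold minus, plus, opp. simpl. lra.
Qed.

(* the contraction, in the weighted norm sup |f(s)| exp(-rate L |s|) on [-L, L] *)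
Lemma picard_contraction phi psi L x M : (forall y, continuous phi y) ->
  (forall y, continuous psi y) -> Rabs x <= L -> 0 <= M ->
  (forall s, Rabs s <= Rabs x -> Rabs (phi s - psi s) <= M * exp (rate L * Rabs s)) ->
  Rabs (picard phi x - picard psi x) <= M / 2 * exp (rate L * Rabs x).
Proof.
  intros Hphi Hpsi HxL HM Hb.
  rewrite picard_diff, Rabs_Ropp by assumption.
  eapply Rle_trans; [apply (RInt2_exp_bound _ x (rhs_lip L * M) (rate L)) |].
  - apply rate_gt0.
  - intros y.
    apply (continuous_minus (V := R_NormedModule)); apply continuous_trunc_rhs; assumption.
  - intros s Hs. eapply Rle_trans; [apply (trunc_rhs_lipschitz phi psi s L); lra |].
    rewrite Rmult_assoc. apply Rmult_le_compat_l; [apply rhs_lip_ge0 | apply Hb, Hs].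
  - pose proof (rhs_lip_le_rate L). pose proof (rate_gt0 L).
    pose proof (exp_pos (rate L * Rabs x)).
    replace (rhs_lip L * M * exp (rate L * Rabs x) / (rate L * rate L))
      with (rhs_lip L / (rate L * rate L) * (M * exp (rate L * Rabs x))) by (field; lra).
    replace (M / 2 * exp (rate L * Rabs x)) with (/ 2 * (M * exp (rate L * Rabs x))) by field.
    apply Rmult_le_compat_r; [apply Rmult_le_pos; lra | assumption].
Qed.

Lemma picard_sub1 phi L x : (forall y, continuous phi y) -> Rabs x <= L ->
  Rabs (picard phi x - 1) <= picard_base L * exp (rate L * Rabs x).
Proof.
  intros Hphi HxL. unfold picard.
  replace (1 - RInt (fun t => RInt (trunc_rhs phi) 0 t) 0 x - 1)
    with (- RInt (fun t => RInt (trunc_rhs phi) 0 t) 0 x) by ring.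
  rewrite Rabs_Ropp. unfold picard_base, Rdiv.
  rewrite Rmult_assoc, (Rmult_comm (/ _)), <- Rmult_assoc.
  apply RInt2_exp_bound; [apply rate_gt0 | intros; apply continuous_trunc_rhs, Hphi |].
  intros s Hs. destruct (trunc_rhs_bound phi s L ltac:(lra)) as [H0 H1].
  rewrite Rabs_pos_eq by exact H0.
  pose proof (pw_ge0 L alpha). pose proof (rate_gt0 L). pose proof (Rabs_pos s).
  pose proof (exp_ineq1_le (rate L * Rabs s)).
  assert (0 <= rate L * Rabs s) by (apply Rmult_le_pos; lra). nra.
Qed.

Lemma picard_iter_step L n x : Rabs x <= L ->
  Rabs (picard_iter (S n) x - picard_iter n x)
    <= picard_base L * (/ 2) ^ n * exp (rate L * Rabs x).
Proof.
  revert x. induction n as [| n IH]; intros x HxL.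
  - simpl. rewrite Rmult_1_r. apply picard_sub1; [apply continuous_const | exact HxL].
  - change (picard_iter (S (S n)) x) with (picard (picard_iter (S n)) x).
    change (picard_iter (S n) x) with (picard (picard_iter n) x).
    replace (picard_base L * (/ 2) ^ S n) with (picard_base L * (/ 2) ^ n / 2) by (simpl; field).
    apply picard_contraction; try apply continuous_picard_iter; try exact HxL.
    + pose proof (picard_base_ge0 L). pose proof (pow_le (/ 2) n ltac:(lra)).
      apply Rmult_le_pos; lra.
    + intros s Hs. apply IH. lra.
Qed.

Lemma picard_iter_cauchy L n m x : (n <= m)%nat -> Rabs x <= L ->
  Rabs (picard_iter m x - picard_iter n x) <= 2 * picard_const L * (/ 2) ^ n.
Proof.
  intros Hnm HxL. replace m with (n + (m - n))%nat by lia.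
  enough (H : forall j, Rabs (picard_iter (n + j) x - picard_iter n x)
                <= 2 * picard_const L * (/ 2) ^ n - 2 * picard_const L * (/ 2) ^ (n + j)).
  { eapply Rle_trans; [apply H |]. pose proof (picard_const_ge0 L).
    pose proof (pow_le (/ 2) (n + (m - n)) ltac:(lra)). nra. }
  induction j as [| j IH].
  - rewrite Nat.add_0_r, Rminus_diag, Rabs_R0, Rminus_diag. lra.
  - rewrite Nat.add_succ_r.
    assert (Hstep : Rabs (picard_iter (S (n + j)) x - picard_iter (n + j) x)
                      <= picard_const L * (/ 2) ^ (n + j)).
    { eapply Rle_trans; [apply picard_iter_step, HxL |]. unfold picard_const.
      pose proof (picard_base_ge0 L). pose proof (rate_gt0 L).
      pose proof (pow_le (/ 2) (n + j) ltac:(lra)).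
      assert (exp (rate L * Rabs x) <= exp (rate L * L))
        by (apply exp_le_compat, Rmult_le_compat_l; lra).
      replace (picard_base L * exp (rate L * L) * (/ 2) ^ (n + j))
        with (picard_base L * (/ 2) ^ (n + j) * exp (rate L * L)) by ring.
      apply Rmult_le_compat_l; [apply Rmult_le_pos |]; assumption. }
    replace (picard_iter (S (n + j)) x - picard_iter n x)
      with ((picard_iter (S (n + j)) x - picard_iter (n + j) x)
            + (picard_iter (n + j) x - picard_iter n x)) by ring.
    eapply Rle_trans; [apply Rabs_triang |]. simpl pow. lra.
Qed.

Definition picard_limit (x : R) : R := real (Lim_seq (fun n => picard_iter n x)).

Lemma is_lim_seq_picard x : is_lim_seq (fun n => picard_iter n x) (picard_limit x).
Proof.
  set (L := Rabs x).
  assert (Hex : ex_finite_lim_seq (fun n => picard_iter n x)).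
  { apply ex_lim_seq_cauchy_corr. intros eps.
    destruct (pow_half_small (2 * picard_const L) eps (cond_pos eps)) as [N HN].
    exists N. intros n m Hn Hm. destruct (Nat.le_ge_cases n m) as [Hnm | Hnm].
    - rewrite Rabs_minus_sym. eapply Rle_lt_trans; [apply picard_iter_cauchy | apply HN];
        unfold L; auto with real.
    - eapply Rle_lt_trans; [apply picard_iter_cauchy | apply HN]; unfold L; auto with real. }
  destruct Hex as [l Hl]. unfold picard_limit. rewrite (is_lim_seq_unique _ _ Hl). exact Hl.
Qed.

Lemma picard_limit_error L n x : Rabs x <= L ->
  Rabs (picard_limit x - picard_iter n x) <= 2 * picard_const L * (/ 2) ^ n.
Proof.
  intros HxL.
  assert (Hlim : is_lim_seq (fun m => Rabs (picard_iter m x - picard_iter n x))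
                   (Rabs (picard_limit x - picard_iter n x))).
  { apply (is_lim_seq_abs _ (picard_limit x - picard_iter n x)).
    apply is_lim_seq_minus'; [apply is_lim_seq_picard | apply is_lim_seq_const]. }
  refine (is_lim_seq_le_loc _ _ _ _ _ Hlim (is_lim_seq_const _)).
  exists n. intros m Hm. apply picard_iter_cauchy; assumption.
Qed.

Lemma continuous_picard_limit x0 : continuous picard_limit x0.
Proof.
  apply continuity_pt_filterlim. intros eps He.
  set (L := Rabs x0 + 1).
  destruct (pow_half_small (2 * picard_const L) (eps / 3) ltac:(lra)) as [N HN].
  specialize (HN N (le_n N)).
  pose proof (proj2 (continuity_pt_filterlim _ _) (continuous_picard_iter N x0)) as Hc.
  destruct (Hc (eps / 3) ltac:(lra)) as [d [Hd Hd']].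
  exists (Rmin d 1). split; [apply Rmin_pos; lra |].
  intros y [Hdx Hy]. simpl in *. unfold R_dist in *.
  assert (Hyd : Rabs (y - x0) < d) by (eapply Rlt_le_trans; [exact Hy | apply Rmin_l]).
  assert (Hy1 : Rabs (y - x0) < 1) by (eapply Rlt_le_trans; [exact Hy | apply Rmin_r]).
  assert (HyL : Rabs y <= L) by (unfold L; pose proof (Rabs_triang_inv y x0); lra).
  pose proof (picard_limit_error L N y HyL) as E1.
  pose proof (picard_limit_error L N x0 ltac:(unfold L; lra)) as E2.
  assert (E3 : Rabs (picard_iter N y - picard_iter N x0) < eps / 3)
    by (apply Hd'; split; [exact Hdx | exact Hyd]).
  pose proof (Rabs_triang (picard_limit y - picard_iter N y)
                (picard_iter N y - picard_iter N x0)) as T1.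
  pose proof (Rabs_triang (picard_limit y - picard_iter N y + (picard_iter N y - picard_iter N x0))
                (- (picard_limit x0 - picard_iter N x0))) as T2.
  rewrite Rabs_Ropp in T2.
  replace (picard_limit y - picard_limit x0)
    with (picard_limit y - picard_iter N y + (picard_iter N y - picard_iter N x0)
          + - (picard_limit x0 - picard_iter N x0)) by ring.
  lra.
Qed.

Lemma picard_limit_fixpoint x : picard_limit x = picard picard_limit x.
Proof.
  set (L := Rabs x). set (A := picard_const L). set (E := exp (rate L * Rabs x)).
  assert (HA : 0 <= A) by apply picard_const_ge0.
  assert (HE : 0 < E) by apply exp_pos.
  assert (Hbound : Rabs (picard_limit x - picard picard_limit x) <= 0).
  { apply (le0_of_le_geom _ (2 * A + A * E)). intros n.
    pose proof (pow_le (/ 2) n ltac:(lra)) as Hpow.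
    assert (E1 : Rabs (picard_limit x - picard_iter (S n) x) <= 2 * A * (/ 2) ^ n).
    { eapply Rle_trans; [apply (picard_limit_error L); unfold L; lra |]. fold A. simpl pow. nra. }
    assert (E2 : Rabs (picard (picard_iter n) x - picard picard_limit x)
                   <= 2 * A * (/ 2) ^ n / 2 * E).
    { apply picard_contraction;
        [apply continuous_picard_iter | apply continuous_picard_limit | unfold L; lra | nra |].
      intros s Hs. rewrite Rabs_minus_sym.
      eapply Rle_trans; [apply (picard_limit_error L), Hs |]. fold A.
      pose proof (exp_ineq1_le (rate L * Rabs s)). pose proof (rate_gt0 L).
      assert (0 <= rate L * Rabs s) by (apply Rmult_le_pos; [lra | apply Rabs_pos]).
      rewrite <- (Rmult_1_r (2 * A * (/ 2) ^ n)) at 1.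
      apply Rmult_le_compat_l; [apply Rmult_le_pos; lra | lra]. }
    pose proof (Rabs_triang (picard_limit x - picard_iter (S n) x)
                  (picard (picard_iter n) x - picard picard_limit x)) as T.
    replace (picard_limit x - picard_iter (S n) x
             + (picard (picard_iter n) x - picard picard_limit x))
      with (picard_limit x - picard picard_limit x) in T by (simpl; ring).
    nra. }
  apply Rminus_diag_uniq, Rabs_eq_0. pose proof (Rabs_pos (picard_limit x - picard picard_limit x)).
  lra.
Qed.

End PicardIteration.

Section EvenSolution.

Variables alpha p : R.
Hypothesis alpha_gt0 : 0 < alpha.
Hypothesis p_ge1 : 1 <= p.

Let Z := picard_limit alpha p.

Definition picard_limit' (x : R) : R := - RInt (trunc_rhs alpha p Z) 0 x.

Let Z' := picard_limit'.

Lemma picard_limit_derive x :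
  is_derive Z x (Z' x) /\ is_derive Z' x (- trunc_rhs alpha p Z x).
Proof.
  assert (HZ : forall y, continuous Z y) by (intros; apply continuous_picard_limit; assumption).
  split.
  - apply (is_derive_ext (picard alpha p Z));
      [intros t; symmetry; apply picard_limit_fixpoint; assumption |].
    apply is_derive_picard; assumption.
  - apply (is_derive_opp (fun t => RInt (trunc_rhs alpha p Z) 0 t)), is_derive_RInt_from0.
    intros y. apply continuous_trunc_rhs; assumption.
Qed.

Lemma picard_limit_0 : Z 0 = 1.
Proof.
  unfold Z. rewrite picard_limit_fixpoint by assumption. unfold picard.
  rewrite RInt_point. change (1 - 0 = 1). ring.
Qed.

Lemma picard_limit'_0 : Z' 0 = 0.
Proof. unfold Z', picard_limit'. rewrite RInt_point. change (- 0 = 0). ring. Qed.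

Lemma picard_limit'_nonincr a b : a <= b -> Z' b <= Z' a.
Proof.
  intros Hab.
  apply (nonincreasing_of_is_derive Z' (fun x => - trunc_rhs alpha p Z x) (a - 1) (b + 1));
    try lra.
  - intros x _. apply picard_limit_derive.
  - intros x _. pose proof (trunc_rhs_ge0 alpha p Z x). lra.
Qed.

Lemma picard_limit_le1 x : Z x <= 1.
Proof.
  rewrite <- picard_limit_0.
  apply (concave_le_crit Z Z' (fun x => - trunc_rhs alpha p Z x) (- Rabs x - 1) (Rabs x + 1));
    try (pose proof (Rabs_pos x); lra).
  - intros t _. apply picard_limit_derive.
  - intros t _. pose proof (trunc_rhs_ge0 alpha p Z t). lra.
  - apply picard_limit'_0.
  - pose proof (Rle_abs x). pose proof (Rle_abs (- x)). rewrite Rabs_Ropp in *. lra.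
Qed.

Lemma picard_limit_ef_sol l r : ef_sol alpha p 1 Z Z' l r.
Proof.
  intros x _. destruct (picard_limit_derive x) as [D1 D2]. split; [exact D1 |].
  apply (is_derive_eq _ _ _ _ D2). unfold trunc_rhs.
  rewrite Rmin_left by apply picard_limit_le1. ring.
Qed.

Lemma picard_limit_even x : Z (- x) = Z x.
Proof.
  set (L := Rabs x + 1).
  assert (Hrefl := ef_sol_reflect alpha p 1 Z Z' (- L) L (picard_limit_ef_sol (- L) L)).
  rewrite Ropp_involutive in Hrefl.
  apply (ef_sol_unique alpha p alpha_gt0 p_ge1 1 (fun y => Z (- y)) (fun y => - Z' (- y))
           Z Z' (- L) L 0); try lra.
  - exact Hrefl.
  - apply picard_limit_ef_sol.
  - unfold L. pose proof (Rabs_pos x). lra.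
  - intros y _. apply picard_limit_le1.
  - intros y _. apply picard_limit_le1.
  - rewrite Ropp_0. reflexivity.
  - rewrite Ropp_0, picard_limit'_0. ring.
  - unfold L. pose proof (Rle_abs x). pose proof (Rle_abs (- x)). rewrite Rabs_Ropp in *. lra.
Qed.

Lemma picard_limit'_neg x : 0 < x -> Z' x < 0.
Proof.
  intros Hx.
  (* near 0, Z stays above 1/2, so the right-hand side is strictly negative there *)
  destruct (proj2 (continuity_pt_filterlim _ _) (continuous_picard_limit alpha p alpha_gt0 p_ge1 0)
              (1 / 2) ltac:(lra)) as [d [Hd Hnear]].
  set (m := Rmin x (d / 2)).
  assert (Hm : 0 < m /\ m <= x /\ m <= d / 2)
    by (unfold m; split; [apply Rmin_pos | split; [apply Rmin_l | apply Rmin_r]]; lra).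
  destruct (MVT_in Z' (fun t => - trunc_rhs alpha p Z t) (-1) (x + 1) (m / 2) m) as [c [Hc Heq]];
    try lra.
  { intros t _. apply picard_limit_derive. }
  assert (HZc : 1 / 2 < Z c).
  { assert (H : Rabs (Z c - Z 0) < 1 / 2).
    { apply Hnear. split; [split; [exact I | lra] |].
      simpl. unfold R_dist. rewrite Rminus_0_r, Rabs_pos_eq; lra. }
    rewrite picard_limit_0 in H. apply Rabs_def2 in H. lra. }
  assert (Hrhs : 0 < trunc_rhs alpha p Z c).
  { apply Rmult_lt_0_compat; apply pw_gt0; [rewrite Rabs_pos_eq |]; try lra.
    apply Rmin_glb_lt; lra. }
  pose proof (picard_limit'_nonincr 0 (m / 2) ltac:(lra)).
  pose proof (picard_limit'_nonincr m x ltac:(lra)).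
  rewrite picard_limit'_0 in *. nra.
Qed.

Lemma picard_limit_root : exists a, 0 < a /\ Z a = 0 /\ forall x, 0 <= x < a -> 0 < Z x.
Proof.
  assert (HZ : forall y, continuous Z y) by (intros; apply continuous_picard_limit; assumption).
  set (d := - Z' 1). assert (Hd : 0 < d) by (unfold d; pose proof (picard_limit'_neg 1); lra).
  set (X := 1 + 2 / d). assert (HX : 1 < X) by (unfold X; pose proof (Rdiv_lt_0_compat 2 d); lra).
  (* Z' <= Z'(1) = -d beyond 1, so Z drops by at least 2 on [1, X] *)
  assert (HZX : Z X < 0).
  { destruct (MVT_in Z Z' 0 (X + 1) 1 X) as [c [Hc Heq]]; try lra.
    { intros t _. apply picard_limit_derive. }
    pose proof (picard_limit'_nonincr 1 c ltac:(lra)). pose proof (picard_limit_le1 1).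
    assert (E : - d * (X - 1) = -2) by (unfold X; field; lra).
    assert (Z' c * (X - 1) <= - d * (X - 1)) by (apply Rmult_le_compat_r; unfold d in *; lra).
    lra. }
  destruct (IVT_gen Z 0 X 0) as [a [Ha HZa]].
  - intros x. apply continuity_pt_filterlim, HZ.
  - rewrite picard_limit_0, Rmin_right, Rmax_left; lra.
  - rewrite Rmin_left, Rmax_right in Ha by lra.
    assert (Ha0 : a <> 0) by (intros ->; rewrite picard_limit_0 in HZa; lra).
    exists a. split; [lra | split; [exact HZa |]].
    intros x Hx. destruct (Req_dec x 0) as [-> | Hx0]; [rewrite picard_limit_0; lra |].
    destruct (MVT_in Z Z' (-1) (a + 1) x a) as [c [Hc Heq]]; try lra.
    { intros t _. apply picard_limit_derive. }
    pose proof (picard_limit'_neg c ltac:(lra)). rewrite HZa in Heq. nra.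
Qed.

Lemma picard_limit_pos_sol :
  exists a, 0 < a /\ pos_sol_on alpha p 1 Z Z' (- a) a /\ Z 0 = 1 /\ Z' 0 = 0.
Proof.
  destruct picard_limit_root as [a [Ha [HZa Hpos]]].
  assert (HZ : forall y, continuous Z y) by (intros; apply continuous_picard_limit; assumption).
  assert (HZma : Z (- a) = 0) by (rewrite picard_limit_even; exact HZa).
  exists a. split; [exact Ha |]. split; [| split; [apply picard_limit_0 | apply picard_limit'_0]].
  split; [| split; [| split; [| split; [| split]]]].
  - apply picard_limit_ef_sol.
  - intros x Hx. destruct (Rle_dec 0 x); [apply Hpos; lra |].
    rewrite <- picard_limit_even. apply Hpos. lra.
  - exact HZma.
  - exact HZa.
  - rewrite <- HZma.
    exact (filterlim_filter_le_1 _ (filter_le_within (F := locally _) _) (HZ (- a))).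
  - rewrite <- HZa.
    exact (filterlim_filter_le_1 _ (filter_le_within (F := locally _) _) (HZ a)).
Qed.

End EvenSolution.

(** * The boundary value problem *)

Lemma Rdiv_in_unit xi a : 0 < a -> - a < xi < a -> -1 < xi / a < 1.
Proof.
  intros Ha Hxi. unfold Rdiv. pose proof (Rinv_0_lt_compat a Ha).
  replace (-1) with (- a * / a) by (field; lra). replace 1 with (a * / a) by (field; lra).
  split; apply Rmult_lt_compat_r; lra.
Qed.

Lemma exists_ne_of_max (f g : R -> R) (P : R -> Prop) s t :
  P s -> P t -> f t <= f s -> g s < g t -> exists x, P x /\ f x <> g x.
Proof.
  intros Hs Ht Hf Hg. destruct (Req_dec (f s) (g s)) as [E | E].
  - exists t. split; [exact Ht | lra].
  - exists s. split; assumption.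
Qed.

Section BoundaryValueProblem.

Variables alpha p lambda : R.
Hypothesis alpha_gt0 : 0 < alpha.
Hypothesis p_gt1 : 1 < p.
Hypothesis lambda_gt0 : 0 < lambda.

Let p_ge1 : 1 <= p := Rlt_le _ _ p_gt1.

(* the factor k for which k z(a x) solves the problem with parameter lambda,
   i.e. lambda = a^(alpha+2) / k^(p-1) *)
Definition amplitude (a : R) : R := Rpower (Rpower a (alpha + 2) / lambda) (/ (p - 1)).

Definition rescaled (a : R) (z : R -> R) (x : R) : R := amplitude a * z (a * x).

Lemma amplitude_pow a : Rpower (amplitude a) (p - 1) = Rpower a (alpha + 2) / lambda.
Proof.
  unfold amplitude. apply Rpower_inv_r; [| lra].
  apply Rdiv_lt_0_compat; [apply exp_pos | exact lambda_gt0].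
Qed.

Lemma bvp_of_ivp z z' a : 0 < a -> pos_sol_on alpha p 1 z z' (- a) a ->
  pos_sol_on alpha p lambda (rescaled a z) (fun x => amplitude a * a * z' (a * x)) (-1) 1.
Proof.
  intros Ha Hz.
  replace (- a) with (a * -1) in Hz by ring. rewrite <- (Rmult_1_r a) in Hz at 2.
  pose proof (pos_sol_on_rescale alpha p 1 z z' (-1) 1 (amplitude a) a (exp_pos _) Ha Hz) as H.
  rewrite amplitude_pow in H.
  replace (1 * Rpower a (alpha + 2) / (Rpower a (alpha + 2) / lambda)) with lambda in H
    by (field; split; try lra; apply Rgt_not_eq, exp_pos).
  exact H.
Qed.

Lemma bvp_of_ivp_le_top z z' a xi : 0 < a -> pos_sol_on alpha p 1 z z' (- a) a ->
  - a < xi < a -> z' xi = 0 -> forall x, -1 <= x <= 1 -> rescaled a z x <= rescaled a z (xi / a).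
Proof.
  intros Ha Hz Hxi Hcrit.
  apply (pos_sol_on_le_crit alpha p lambda _ _ (-1) 1 (xi / a) (Rlt_le _ _ lambda_gt0)
           (bvp_of_ivp z z' a Ha Hz)).
  - apply Rdiv_in_unit; assumption.
  - cbv beta. replace (a * (xi / a)) with xi by (field; lra). rewrite Hcrit. ring.
Qed.

Lemma bvp_of_ivp_lt_top z z' a xi : 0 < a -> pos_sol_on alpha p 1 z z' (- a) a ->
  0 < xi < a -> z' xi = 0 -> forall s, -1 < s < xi / a -> rescaled a z s < rescaled a z (xi / a).
Proof.
  intros Ha Hz Hxi Hcrit.
  apply (pos_sol_on_lt_crit alpha p lambda _ _ (-1) 1 (xi / a) lambda_gt0
           (bvp_of_ivp z z' a Ha Hz)).
  - split; [apply Rdiv_lt_0_compat | apply Rdiv_in_unit]; lra.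
  - cbv beta. replace (a * (xi / a)) with xi by (field; lra). rewrite Hcrit. ring.
Qed.

Lemma lambda_of_rescaled_top z a xi : 0 < a -> z xi = 1 ->
  lambda = pw a (alpha + 2) / pw (rescaled a z (xi / a)) (p - 1).
Proof.
  intros Ha Hz. unfold rescaled. replace (a * (xi / a)) with xi by (field; lra).
  rewrite Hz, Rmult_1_r, !pw_eq_Rpower, amplitude_pow by (assumption || apply exp_pos).
  field. split; try lra; apply Rgt_not_eq, exp_pos.
Qed.

Lemma rescaled_even a z x : (forall y, z (- y) = z y) -> rescaled a z (- x) = rescaled a z x.
Proof. intros Hz. unfold rescaled. rewrite <- Hz. do 2 f_equal. ring. Qed.

Lemma bvp_reflect v v' : pos_sol_on alpha p lambda v v' (-1) 1 ->
  pos_sol_on alpha p lambda (fun x => v (- x)) (fun x => - v' (- x)) (-1) 1.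
Proof.
  intros Hv. pose proof (pos_sol_on_reflect alpha p lambda v v' (-1) 1 Hv) as H.
  replace (- -1) with 1 in H by ring. replace (- (1)) with (-1) in H by ring. exact H.
Qed.

Lemma bvp_normalize v v' eta : pos_sol_on alpha p lambda v v' (-1) 1 -> -1 < eta < 1 ->
  v' eta = 0 ->
  exists c w w', 0 < c /\ pos_sol_on alpha p 1 w w' (- c) c /\ w (c * eta) = 1 /\
    w' (c * eta) = 0 /\ forall x, -1 <= x <= 1 -> v x = rescaled c w x.
Proof.
  intros Hv Heta Hcrit.
  set (m := v eta). assert (Hm : 0 < m) by (apply (proj1 (proj2 Hv)), Heta).
  (* c is chosen so that the rescaled equation has coefficient 1 *)
  set (c := Rpower (lambda * Rpower m (p - 1)) (/ (alpha + 2))).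
  assert (Hc : 0 < c) by apply exp_pos.
  assert (Hcpow : Rpower c (alpha + 2) = lambda * Rpower m (p - 1)).
  { apply Rpower_inv_r; [apply Rmult_lt_0_compat; [exact lambda_gt0 | apply exp_pos] | lra]. }
  assert (Hamp : amplitude c = m).
  { unfold amplitude. rewrite Hcpow. replace (lambda * Rpower m (p - 1) / lambda)
      with (Rpower m (p - 1)) by (field; lra). apply Rpower_inv_l; lra. }
  exists c, (fun y => / m * v (/ c * y)), (fun y => / m * / c * v' (/ c * y)).
  split; [exact Hc | split; [| split; [| split]]].
  - replace (-1) with (/ c * - c) in Hv by (field; lra).
    replace 1 with (/ c * c) in Hv by (field; lra).
    pose proof (pos_sol_on_rescale alpha p lambda v v' (- c) c (/ m) (/ c)
                  (Rinv_0_lt_compat _ Hm) (Rinv_0_lt_compat _ Hc) Hv) as H.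
    rewrite !Rpower_Rinv_base, Hcpow in H by assumption.
    replace (lambda * / (lambda * Rpower m (p - 1)) / / Rpower m (p - 1)) with 1 in H
      by (field; split; try lra; apply Rgt_not_eq, exp_pos).
    exact H.
  - replace (/ c * (c * eta)) with eta by (field; lra). fold m. field. lra.
  - replace (/ c * (c * eta)) with eta by (field; lra). rewrite Hcrit. ring.
  - intros x _. unfold rescaled. rewrite Hamp.
    replace (/ c * (c * x)) with x by (field; lra). field. lra.
Qed.

Lemma rescaled_unique w w' c z z' a xi :
  pos_sol_on alpha p 1 w w' (- c) c -> pos_sol_on alpha p 1 z z' (- a) a ->
  - c < xi < c -> - a < xi < a -> w xi = 1 -> z xi = 1 -> w' xi = 0 -> z' xi = 0 ->
  forall x, -1 <= x <= 1 -> rescaled c w x = rescaled a z x.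
Proof.
  intros Hw Hz Hxw Hxz Vw Vz Dw Dz x Hx.
  destruct (pos_sol_on_unique alpha p alpha_gt0 p_ge1 1 w w' (- c) c z z' (- a) a xi)
    as [_ [<- Hwz]]; try (assumption || lra).
  unfold rescaled. rewrite Hwz; [reflexivity |]. split; nra.
Qed.

Section Classification.

Variables (z0 z0' Z Z' : R -> R) (xi0 a0 a1 : R).
Hypothesis z0_sol : pos_sol_on alpha p 1 z0 z0' (- a0) a0.
Hypothesis xi0_range : 0 < xi0 < a0.
Hypothesis z0_top : z0 xi0 = 1.
Hypothesis z0_crit : z0' xi0 = 0.
Hypothesis xi0_unique :
  forall xi b a, 0 < xi -> ivp_roots alpha p xi b a -> a = - b -> xi = xi0.
Hypothesis Z_sol : pos_sol_on alpha p 1 Z Z' (- a1) a1.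
Hypothesis a1_gt0 : 0 < a1.
Hypothesis Z_top : Z 0 = 1.
Hypothesis Z_crit : Z' 0 = 0.

Lemma bvp_rescaled_of_crit_pos v v' eta : pos_sol_on alpha p lambda v v' (-1) 1 -> 0 < eta < 1 ->
  v' eta = 0 -> forall x, -1 <= x <= 1 -> v x = rescaled a0 z0 x.
Proof.
  intros Hv Heta Hcrit.
  destruct (bvp_normalize v v' eta Hv ltac:(lra) Hcrit) as [c [w [w' [Hc [Hw [Vw [Dw Hvw]]]]]]].
  (* the normalized solution has symmetric roots, so its maximum sits at xi0 *)
  assert (Hxi : c * eta = xi0).
  { apply (xi0_unique _ (- c) c); [nra | | ring].
    apply ivp_roots_iff. split; [nra | exists w, w'; tauto]. }
  rewrite Hxi in Vw, Dw.
  intros x Hx. rewrite Hvw by exact Hx.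
  apply (rescaled_unique w w' c z0 z0' a0 xi0); try assumption; nra.
Qed.

Lemma bvp_classification v : pos_sol alpha p lambda v ->
  (forall x, -1 <= x <= 1 -> v x = rescaled a1 Z x) \/
  (forall x, -1 <= x <= 1 -> v x = rescaled a0 z0 x) \/
  (forall x, -1 <= x <= 1 -> v x = rescaled a0 z0 (- x)).
Proof.
  intros Hv. apply pos_sol_iff in Hv as [v' Hv].
  destruct (pos_sol_on_crit alpha p lambda v v' (-1) 1 ltac:(lra) Hv) as [eta [Heta Hcrit]].
  destruct (Rtotal_order eta 0) as [Hneg | [-> | Hpos]].
  - right; right. intros x Hx.
    rewrite <- (bvp_rescaled_of_crit_pos _ _ (- eta) (bvp_reflect v v' Hv)), Ropp_involutive;
      [reflexivity | lra | rewrite Ropp_involutive, Hcrit; ring | lra].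
  - left. destruct (bvp_normalize v v' 0 Hv ltac:(lra) Hcrit)
      as [c [w [w' [Hc [Hw [Vw [Dw Hvw]]]]]]].
    rewrite Rmult_0_r in Vw, Dw.
    intros x Hx. rewrite Hvw by exact Hx.
    apply (rescaled_unique w w' c Z Z' a1 0); try assumption; lra.
  - right; left. apply (bvp_rescaled_of_crit_pos v v' eta); [exact Hv | lra | exact Hcrit].
Qed.

End Classification.

End BoundaryValueProblem.

Theorem theorem6p1 (alpha p : R) (Halpha : 0 < alpha) (Hp : 1 < p)
  (xi0 b0 a0 : R) (Hxi0 : 0 < xi0) (Hroots0 : ivp_roots alpha p xi0 b0 a0)
  (Hsym0 : a0 = - b0)
  (Huniq : forall xi b a, 0 < xi -> ivp_roots alpha p xi b a -> a = - b -> xi = xi0)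
  (lambda : R) (Hlambda : 0 < lambda) :
  exists u1 u2 u3 : R -> R,
    pos_sol alpha p lambda u1 /\ pos_sol alpha p lambda u2 /\
    pos_sol alpha p lambda u3 /\
    (* the three solutions are distinct *)
    (exists x, -1 < x < 1 /\ u1 x <> u2 x) /\
    (exists x, -1 < x < 1 /\ u1 x <> u3 x) /\
    (exists x, -1 < x < 1 /\ u2 x <> u3 x) /\
    (* and they are the only positive solutions *)
    (forall v, pos_sol alpha p lambda v ->
       (forall x, -1 <= x <= 1 -> v x = u1 x) \/
       (forall x, -1 <= x <= 1 -> v x = u2 x) \/
       (forall x, -1 <= x <= 1 -> v x = u3 x)) /\
    (* u1 is even *)
    (forall x, -1 <= x <= 1 -> u1 (- x) = u1 x) /\
    (* u2 attains its maximum at xi0 / a(xi0) *)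
    (forall x, -1 <= x <= 1 -> u2 x <= u2 (xi0 / a0)) /\
    (* u3 is the reflection of u2 *)
    (forall x, -1 <= x <= 1 -> u3 x = u2 (- x)) /\
    (* relation between lambda and m = max u2 *)
    lambda = pw a0 (alpha + 2) / pw (u2 (xi0 / a0)) (p - 1).
Proof.
  apply ivp_roots_iff in Hroots0 as [Hxi [z0 [z0' [Hz0 [Hz0top Hz0crit]]]]].
  replace b0 with (- a0) in * by lra.
  destruct (picard_limit_pos_sol alpha p Halpha (Rlt_le _ _ Hp)) as [a1 [Ha1 [HZ [HZtop HZcrit]]]].
  set (u1 := rescaled alpha p lambda a1 (picard_limit alpha p)).
  set (u2 := rescaled alpha p lambda a0 z0).
  set (t := xi0 / a0).
  assert (Ht : 0 < t < 1) by (split; [apply Rdiv_lt_0_compat | apply Rdiv_in_unit]; lra).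
  pose proof (bvp_of_ivp alpha p lambda Hp Hlambda _ _ a0 ltac:(lra) Hz0) as S2.
  pose proof (bvp_of_ivp_lt_top alpha p lambda Hp Hlambda _ _ a0 xi0 ltac:(lra) Hz0
                ltac:(lra) Hz0crit) as L2. fold t in L2.
  pose proof (bvp_of_ivp_le_top alpha p lambda Hp Hlambda _ _ a1 0 Ha1 HZ ltac:(lra) HZcrit) as M1.
  rewrite Rdiv_0_l in M1.
  exists u1, u2, (fun x => u2 (- x)).
  repeat match goal with |- _ /\ _ => split end.
  - apply pos_sol_iff. eexists. exact (bvp_of_ivp alpha p lambda Hp Hlambda _ _ a1 Ha1 HZ).
  - apply pos_sol_iff. eexists. exact S2.
  - apply pos_sol_iff. eexists. exact (bvp_reflect _ _ _ _ _ S2).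
  - apply (exists_ne_of_max _ _ (fun x => -1 < x < 1) 0 t); [lra | lra | apply M1 | apply L2]; lra.
  - apply (exists_ne_of_max _ _ (fun x => -1 < x < 1) 0 (- t)); [lra | lra | apply M1; lra |].
    rewrite Ropp_0, Ropp_involutive. apply L2. lra.
  - exists t. split; [lra |]. apply not_eq_sym, Rlt_not_eq, L2. lra.
  - exact (bvp_classification alpha p lambda Halpha Hp Hlambda _ _ _ _ xi0 a0 a1
             Hz0 ltac:(lra) Hz0top Hz0crit Huniq HZ Ha1 HZtop HZcrit).
  - intros x _. apply rescaled_even, picard_limit_even; lra.
  - apply (bvp_of_ivp_le_top alpha p lambda Hp Hlambda z0 z0' a0 xi0); assumption || lra.
  - reflexivity.
  - apply lambda_of_rescaled_top; assumption || lra.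
Qed.
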